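(* Let $\Gamma=\langle V,(w_u)_{u\in V},\alpha,\beta\rangle$ be a star celebrity game with $\beta>1$ and $n=|V|$, let $S$ be a Nash equilibrium of $\Gamma$ and $G=G[S]$. If there is a vertex $v\in V$ with $|S_v|>6n/\beta$, then there exists $X\subseteq S_v$ with $|X|\ge 3n/\beta$ such that for every $x\in X$ the edge $\{v,x\}$ is a bridge of $G$.
   Context: A celebrity game $\Gamma=\langle V,(w_u)_{u\in V},\alpha,\beta\rangle$ consists of a set of players $V=\{1,\dots,n\}$, celebrity weights $w_u>0$, a link cost $\alpha>0$ and a critical distance $\beta$ with $1\le\beta\le n-1$. A strategy of player $u$ is a set $S_u\subseteq V\setminus\{u\}$; a strategy profile is $S=(S_1,\dots,S_n)$; its outcome graph $G[S]$ is the undirected graph on $V$ with edge set $\{\{u,v\}: u\in S_v\text{ or }v\in S_u\}$. With $d_G$ the graph distance (infinite between different connected components), the cost of player $u$ is $c_u(S)=\alpha|S_u|+\sum_{v:\,d_{G[S]}(u,v)>\beta}w_v$. $S$ is a Nash equilibrium if no player can strictly decrease its cost by changing only its own strategy. $\Gamma$ is a star celebrity game if $G[S]$ is connected for some Nash equilibrium $S$. A bridge is an edge whose removal increases the number of connected components. *)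

From mathcomp Require Import all_boot all_order all_algebra.
Set Implicit Arguments. Unset Strict Implicit. Unset Printing Implicit Defensive.
Import Order.TTheory GRing.Theory Num.Theory.

Section Celebrity.
Variable n : nat.
Local Notation V := 'I_n.

(* a strategy profile: S u is the set of players u buys links to *)
Definition profile := V -> {set V}.

Definition valid_profile (S : profile) : Prop := forall u, u \notin S u.

Definition outcome (S : profile) : rel V :=
  fun u v => (u != v) && ((u \in S v) || (v \in S u)).

Fixpoint ball (e : rel V) (k : nat) (u : V) : {set V} :=
  match k with
  | 0 => [set u]
  | k'.+1 => ball e k' u :|: [set y | [exists x in ball e k' u, e x y]]
  end.

(* d_e(u,v) > k  (infinite distance included) *)
Definition dist_gt (e : rel V) (u v : V) (k : nat) : bool := v \notin ball e k u.

Variable R : realFieldType.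

Definition cost (w : V -> R) (alpha : R) (beta : nat) (S : profile) (u : V) : R :=
  (alpha * (#|S u|%:R) + \sum_(v | dist_gt (outcome S) u v beta) w v)%R.

Definition deviate (S : profile) (u : V) (T : {set V}) : profile :=
  fun x => if x == u then T else S x.

Definition nash (w : V -> R) (alpha : R) (beta : nat) (S : profile) : Prop :=
  valid_profile S /\
  forall u (T : {set V}), u \notin T ->
    (cost w alpha beta S u <= cost w alpha beta (deviate S u T) u)%R.

Definition connected_graph (e : rel V) : Prop := forall u v, connect e u v.

Definition star_game (w : V -> R) (alpha : R) (beta : nat) : Prop :=
  exists S, nash w alpha beta S /\ connected_graph (outcome S).

Definition ncomp (e : rel V) : nat := n_comp e predT.

Definition remove_edge (e : rel V) (u v : V) : rel V :=
  fun x y => e x y && ([set x; y] != [set u; v]).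

Definition bridge (e : rel V) (u v : V) : Prop :=
  e u v /\ (ncomp e < ncomp (remove_edge e u v))%N.

End Celebrity.

From mathcomp Require Import all_boot all_order all_algebra zify.
Import Order.TTheory GRing.Theory Num.Theory.
Set Implicit Arguments. Unset Strict Implicit. Unset Printing Implicit Defensive.

(* In an equilibrium no link is bought twice, and each link vx bought by v must
   bring some vertex z into the beta-ball of v, since otherwise v saves alpha by
   dropping it.  If vx is not a bridge, let L_x = lengthened e v beta x be the
   set of vertices within distance beta of v whose distance from v grows when vx
   is removed.  Walking from x along shortest paths avoiding vx, towards z and
   towards v, yields at least beta/3 vertices of L_x.  The sets L_x are pairwise
   disjoint, since a shortest path from v leaves v through a single edge.  Hence
   at most 3n/beta links of v are not bridges. *)

Section Balls.
Variable n : nat.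
Implicit Types (e : rel 'I_n) (u x y z q : 'I_n).

Lemma ball0 e u y : (y \in ball e 0 u) = (y == u).
Proof. exact: in_set1. Qed.

Lemma ballS e k u y :
  (y \in ball e k.+1 u) = (y \in ball e k u) || [exists x in ball e k u, e x y].
Proof. by rewrite /= in_setU inE. Qed.

Lemma ballSP e k u y : y \in ball e k.+1 u ->
  y \in ball e k u \/ exists2 x, x \in ball e k u & e x y.
Proof.
by rewrite ballS => /orP[|/existsP[x /andP[hx hxy]]]; [left | right; exists x].
Qed.

Lemma ball_step e k u x y : x \in ball e k u -> e x y -> y \in ball e k.+1 u.
Proof.
by move=> hx hxy; rewrite ballS; apply/orP; right; apply/existsP; exists x; rewrite hx.
Qed.

Lemma ball_mono e k m u y : k <= m -> y \in ball e k u -> y \in ball e m u.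
Proof.
elim: m => [|m IHm]; first by rewrite leqn0 => /eqP->.
by rewrite leq_eqVlt ltnS => /predU1P[->//|/IHm hk /hk]; rewrite ballS => ->.
Qed.

Lemma ballW e k u y : y \in ball e k u -> y \in ball e k.+1 u.
Proof. exact: ball_mono. Qed.

Lemma ball_center e k u : u \in ball e k u.
Proof. by apply: (@ball_mono e 0) => //; rewrite ball0. Qed.

Lemma ball_trans e a b u y z :
  y \in ball e a u -> z \in ball e b y -> z \in ball e (a + b) u.
Proof.
move=> hy; elim: b z => [|b IHb] z; first by rewrite ball0 addn0 => /eqP->.
case/ballSP=> [/IHb|[x /IHb hx hxz]]; rewrite addnS; first exact: ballW.
exact: ball_step hx hxz.
Qed.

Lemma ball_split e a b u z :
  z \in ball e (a + b) u -> exists2 q, q \in ball e a u & z \in ball e b q.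
Proof.
elim: b z => [|b IHb] z; first by rewrite addn0 => hz; exists z; rewrite ?ball0.
rewrite addnS => /ballSP[/IHb[q hq hz]|[x /IHb[q hq hx] hxz]]; exists q => //.
  exact: ballW.
exact: ball_step hx hxz.
Qed.

Lemma ball_sym e k u y : symmetric e -> y \in ball e k u -> u \in ball e k y.
Proof.
move=> se; elim: k y => [|k IHk] y; first by rewrite !ball0 eq_sym.
case/ballSP=> [/IHk|[x /IHk hx hxy]]; first exact: ballW.
rewrite -add1n; apply: ball_trans hx.
by apply: ball_step (ball_center e 0 y) _; rewrite se.
Qed.

Lemma ball_subrel e e' k u y : subrel e' e -> y \in ball e' k u -> y \in ball e k u.
Proof.
move=> sub; elim: k y => [|k IHk] y //.
case/ballSP=> [/IHk|[x /IHk hx /sub hxy]]; [exact: ballW | exact: ball_step hx hxy].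
Qed.

Lemma eq_ball e e' k u : e =2 e' -> ball e k u = ball e' k u.
Proof.
by move=> ee; apply/setP => y; apply/idP/idP; apply: ball_subrel => a b; rewrite ee.
Qed.

Lemma connect_ball e u y : connect e u y -> exists k, y \in ball e k u.
Proof.
case/connectP=> p; elim: p u => [|x p IHp] u /=.
  by move=> _ ->; exists 0; rewrite ball0.
case/andP=> hux /IHp hp /hp[k hk]; exists (1 + k); apply: ball_trans hk.
exact: ball_step (ball_center e 0 u) hux.
Qed.

Definition sphere e k x : {set 'I_n} :=
  [set q in ball e k x | [forall j : 'I_k, q \notin ball e j x]].

Lemma sphereP e k x q :
  reflect (q \in ball e k x /\ forall j, j < k -> q \notin ball e j x)
          (q \in sphere e k x).
Proof.
rewrite inE; apply: (iffP andP) => -[hq hj]; split=> //.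
  by move=> j ltjk; apply: (forallP hj (Ordinal ltjk)).
by apply/forallP => j; apply: hj.
Qed.

Lemma ball_sphere e k x y :
  y \in ball e k x -> exists2 m, m <= k & y \in sphere e m x.
Proof.
move=> hy; have exm : exists m, y \in ball e m x by exists k.
case: (ex_minnP exm) => m hm mmin; exists m; first exact: mmin.
apply/sphereP; split=> // j ltjm; apply: contraTN ltjm => /mmin; by rewrite -leqNgt.
Qed.

Lemma sphere_geodesic e x y L t : y \in sphere e L x -> t <= L ->
  exists2 q, q \in sphere e t x & y \in ball e (L - t) q.
Proof.
case/sphereP=> hy hmin leLt.
have /ball_split[q hq hyq] : y \in ball e (t + (L - t)) x by rewrite subnKC.
exists q => //; apply/sphereP; split=> // j ltjt.
have ltjL : j + (L - t) < L by lia.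
by apply: contra (hmin _ ltjL) => hqj; apply: ball_trans hqj hyq.
Qed.

Lemma sphere_hits_card e x (D : {set 'I_n}) T :
  (forall t, t <= T -> exists2 q, q \in D & q \in sphere e t x) -> T < #|D|.
Proof.
move=> hD; suff: T < #|D :&: ball e T x|.
  by move/leq_trans; apply; rewrite subset_leq_card ?subsetIl.
elim: T hD => [|T IHT] hD.
  have [q qD /sphereP[hq _]] := hD 0 (leqnn 0).
  by rewrite card_gt0; apply/set0Pn; exists q; rewrite inE qD.
apply: leq_ltn_trans (IHT (fun t ltT => hD t (leqW ltT))) _.
apply: proper_card; apply/properP; split.
  by apply/subsetP => y; rewrite !in_setI => /andP[-> /ballW].
have [q qD /sphereP[hq hmin]] := hD T.+1 (leqnn _).
by exists q; rewrite inE qD ?hq // (negbTE (hmin T (ltnSn T))).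
Qed.

End Balls.

Section RemoveEdge.
Variable n : nat.
Implicit Types (e : rel 'I_n) (u x y z q a b c d : 'I_n).

Lemma set2_inj a b c d : [set a; b] = [set c; d] ->
  (a = c /\ b = d) \/ (a = d /\ b = c).
Proof.
move=> E; have /set2P ha : a \in [set c; d] by rewrite -E set21.
have /set2P hb : b \in [set c; d] by rewrite -E set22.
have /set2P hc : c \in [set a; b] by rewrite E set21.
have /set2P hd : d \in [set a; b] by rewrite E set22.
by move: hb hc hd; case: ha => ?; subst; do 3 (case=> ?; subst); by [left | right].
Qed.

Lemma remove_edge_sub e v x : subrel (remove_edge e v x) e.
Proof. by move=> a b /andP[]. Qed.

Lemma remove_edge_sym e v x : symmetric e -> symmetric (remove_edge e v x).
Proof. by move=> se a b; rewrite /remove_edge se setUC. Qed.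

Lemma remove_edgeP e v x a b : e a b ->
  [\/ remove_edge e v x a b, a = v /\ b = x | a = x /\ b = v].
Proof.
move=> hab; rewrite /remove_edge hab /=.
by have [/set2_inj[]|] := eqVneq; [constructor 2 | constructor 3 | constructor 1].
Qed.

Lemma remove_edge_other e v x y : e v x -> v != x -> x != y -> remove_edge e v y v x.
Proof.
move=> hvx nvx nxy; rewrite /remove_edge hvx /=.
by apply/eqP => /set2_inj[[_ xy]|[_ xv]]; [move: nxy | move: nvx]; rewrite ?xy ?xv eqxx.
Qed.

Lemma ball_remove_edge e v x k u : u \in ball e k.+1 v ->
  u \in ball (remove_edge e v x) k.+1 v \/ u \in ball (remove_edge e v x) k x.
Proof.
elim: k u => [|k IHk] u.
  case/ballSP=> [|[y]]; first by rewrite ball0 => /eqP->; left; apply: ball_center.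
  rewrite [y \in _]ball0 => /eqP-> /(remove_edgeP v x)[h|[_ ->]|[_ ->]].
  - by left; apply: ball_step (ball_center _ 0 v) h.
  - by right; apply: ball_center.
  - by left; apply: ball_center.
case/ballSP=> [/IHk[]|[y /IHk hy /(remove_edgeP v x)[h|[_ ->]|[_ ->]]]].
- by left; apply: ballW.
- by right; apply: ballW.
- by case: hy => hy; [left | right]; apply: ball_step hy h.
- by right; apply: ball_center.
- by left; apply: ball_center.
Qed.

Lemma ball_remove_edge2 e v x y k u :
  e v x -> e v y -> v != x -> v != y -> x != y -> u \in ball e k v ->
  u \in ball (remove_edge e v x) k v \/ u \in ball (remove_edge e v y) k v.
Proof.
move=> hx hy nvx nvy nxy; elim: k u => [|k IHk] u; first by left.
case/ballSP=> [/IHk[] hu|[q /IHk hq hqu]].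
- by left; apply: ballW.
- by right; apply: ballW.
have [h|[_ ->]|[_ ->]] := remove_edgeP v x hqu; last by left; apply: ball_center.
- case: hq => hq; first by left; apply: ball_step hq h.
  have [h'|[_ ->]|[_ ->]] := remove_edgeP v y hqu; last by right; apply: ball_center.
  + by right; apply: ball_step hq h'.
  + have nyx : y != x by rewrite eq_sym.
    by left; apply: ball_step (ball_center _ k v) (remove_edge_other hy nvy nyx).
- by right; apply: ball_step (ball_center _ k v) (remove_edge_other hx nvx nxy).
Qed.

Lemma ncomp_subrel_lt e e' a b : symmetric e -> symmetric e' -> subrel e' e ->
  e a b -> ~~ connect e' a b -> ncomp e < ncomp e'.
Proof.
move=> se se' sub hab nab.
have ce := sym_connect_sym se; have ce' := sym_connect_sym se'.
have subc : subrel (connect e') (connect e).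
  by apply: connect_sub => x y /sub/connect1.
have ncompE f : ncomp f = #|[set r | roots f r]|.
  by rewrite /ncomp cardsE; apply: eq_card => r; rewrite !inE andbT.
have rootE y : fingraph.root e (fingraph.root e' y) = fingraph.root e y.
  by apply/esym/(fingraph.rootP ce)/subc/connect_root.
have img : fingraph.root e @: [set r | roots e' r] = [set r | roots e r].
  apply/setP => r; apply/imsetP/idP => [[s _ ->]|]; first by rewrite inE roots_root.
  by rewrite inE => /eqP hr; exists (fingraph.root e' r); rewrite ?inE ?roots_root ?rootE.
(* root e merges the components of a and b in e' *)
rewrite !ncompE -img ltn_neqAle leq_imset_card andbT.
apply: contra nab => /imset_injP inj; apply/(fingraph.rootP ce').
by apply: inj; rewrite ?inE ?roots_root // !rootE; apply/(fingraph.rootP ce)/connect1.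
Qed.

Lemma bridge_remove_edge e v x : symmetric e -> e v x ->
  ~~ connect (remove_edge e v x) x v -> bridge e v x.
Proof.
move=> se hvx nc; split=> //.
have se' := remove_edge_sym v x se.
rewrite se in hvx; exact: ncomp_subrel_lt se se' (@remove_edge_sub e v x) hvx nc.
Qed.

End RemoveEdge.

Section Game.
Variable n : nat.
Implicit Types (S : profile n) (u v x a b : 'I_n).

Lemma outcome_sym S : symmetric (outcome S).
Proof. by move=> a b; rewrite /outcome eq_sym orbC. Qed.

Lemma outcome_irr S : irreflexive (outcome S).
Proof. by move=> a; rewrite /outcome eqxx. Qed.

Lemma outcome_link S v x : valid_profile S -> x \in S v -> outcome S v x.
Proof.
move=> val hx; rewrite /outcome hx orbT andbT.
by apply: contraNneq (val v) => vx; rewrite {1}vx.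
Qed.

Lemma outcome_drop_double S v x : v \in S x ->
  outcome (deviate S v (S v :\ x)) =2 outcome S.
Proof.
move=> hv a b; rewrite /outcome /deviate.
have [->|na] := eqVneq a v; have [->|nb] := eqVneq b v; rewrite ?eqxx //= in_setD1.
- by case: (eqVneq b x) => [->|] /=; rewrite ?hv ?orbT.
- by case: (eqVneq a x) => [->|] /=; rewrite ?hv ?orbT.
Qed.

Lemma outcome_drop_single S v x : valid_profile S -> x \in S v -> v \notin S x ->
  outcome (deviate S v (S v :\ x)) =2 remove_edge (outcome S) v x.
Proof.
move=> val hx hv a b; rewrite /remove_edge /outcome /deviate.
have [/set2_inj[[-> ->]|[-> ->]]|nab] := eqVneq [set a; b] [set v; x].
- by case: (eqVneq x v) => [->|_]; rewrite ?eqxx ?in_setD1 ?eqxx ?(negbTE hv) ?andbF.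
- by case: (eqVneq x v) => [->|_]; rewrite ?eqxx ?in_setD1 ?eqxx ?(negbTE hv) ?andbF.
rewrite andbT; move: nab.
have [->|na] := eqVneq a v; have [->|nb] := eqVneq b v; rewrite ?eqxx //= in_setD1.
- by case: (eqVneq b x) => [->|_]; rewrite ?eqxx.
- by rewrite na; case: (eqVneq a x) => [->|_] //; rewrite setUC eqxx.
Qed.

Variables (R : realFieldType) (w : 'I_n -> R) (alpha : R) (beta : nat).
Hypothesis alpha_gt0 : (0 < alpha)%R.

Lemma nash_drop_link S v x (e' : rel 'I_n) :
  nash w alpha beta S -> x \in S v ->
  outcome (deviate S v (S v :\ x)) =2 e' -> subrel e' (outcome S) ->
  exists2 z, z \in ball (outcome S) beta v & z \notin ball e' beta v.
Proof.
move=> [val ne] hx dev sub.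
have [/existsP[z /andP[hz hz']]|] :=
  boolP [exists z, (z \in ball (outcome S) beta v) && (z \notin ball e' beta v)].
  by exists z.
rewrite negb_exists => /forallP same; exfalso.
have far_eq : (\sum_(z | dist_gt (outcome (deviate S v (S v :\ x))) v z beta) w z =
               \sum_(z | dist_gt (outcome S) v z beta) w z)%R.
  apply: eq_bigl => z; rewrite /dist_gt (eq_ball _ _ dev).
  have /nandP[hz|/negPn hz] := same z; last by rewrite hz (ball_subrel sub hz).
  by rewrite hz; apply: contra hz; apply: ball_subrel.
have := ne v (S v :\ x); rewrite in_setD1 (negbTE (val v)) andbF => /(_ isT).
rewrite /cost {1}/deviate eqxx far_eq (cardsD1 x (S v)) hx add1n -natr1.
by rewrite mulrDr mulr1 -addrA lerD2l gerDr leNgt alpha_gt0.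
Qed.

Lemma nash_single_link S v x : nash w alpha beta S -> x \in S v -> v \notin S x.
Proof.
move=> hne hx; apply/negP => hv.
have [z hz] := nash_drop_link hne hx (outcome_drop_double hv) (fun _ _ => id).
by rewrite hz.
Qed.

Lemma nash_link_lengthens S v x : nash w alpha beta S -> x \in S v ->
  exists2 z, z \in ball (outcome S) beta v
           & z \notin ball (remove_edge (outcome S) v x) beta v.
Proof.
move=> hne hx; have dev := outcome_drop_single hne.1 hx (nash_single_link hne hx).
exact: nash_drop_link hne hx dev (@remove_edge_sub _ _ v x).
Qed.

End Game.

Section Lengthened.
Variables (n : nat) (e : rel 'I_n) (v : 'I_n).
Hypotheses (e_sym : symmetric e) (e_irr : irreflexive e).

Definition lengthened beta x : {set 'I_n} :=
  [set u | [exists k : 'I_beta.+1,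
     (u \in ball e k v) && (u \notin ball (remove_edge e v x) k v)]].

Let edge_neq a b : e a b -> a != b.
Proof. by apply: contraTneq => ->; rewrite e_irr. Qed.

Lemma lengthened_disjoint beta x y u : e v x -> e v y ->
  u \in lengthened beta x -> u \in lengthened beta y -> x = y.
Proof.
move=> hx hy; rewrite !inE => /existsP[i /andP[hi hi']] /existsP[j /andP[hj hj']].
apply/eqP; apply: contraT => nxy.
have nvx := edge_neq hx; have nvy := edge_neq hy.
have [leij|/ltnW leji] := leqP i j.
  have [hx'|hy'] := ball_remove_edge2 hx hy nvx nvy nxy hi; first by rewrite hx' in hi'.
  by rewrite (ball_mono leij hy') in hj'.
have [hx'|hy'] := ball_remove_edge2 hx hy nvx nvy nxy hj; last by rewrite hy' in hj'.
by rewrite (ball_mono leji hx') in hi'.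
Qed.

Variable x : 'I_n.
Hypothesis e_vx : e v x.
Local Notation e' := (remove_edge e v x).

Let e'_sym : symmetric e' := remove_edge_sym v x e_sym.

Lemma lengthened_through b t q : t <= b ->
  q \in ball e' t x -> q \notin ball e' t.+1 v -> q \in lengthened b.+1 x.
Proof.
move=> letb hq hq'; rewrite inE; apply/existsP.
exists (Ordinal (letb : t.+1 < b.+2)) => /=.
rewrite hq' andbT; have hx : x \in ball e 1 v := ball_step (ball_center e 0 v) e_vx.
exact: ball_trans hx (ball_subrel (@remove_edge_sub _ e v x) hq).
Qed.

Lemma lengthened_far b z m : z \notin ball e' b.+1 v ->
  z \in sphere e' m x -> m <= b -> m < #|lengthened b.+1 x|.
Proof.
move=> hz hzm lemb; apply: (@sphere_hits_card _ e' x) => t letm.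
have [q hqt hzq] := sphere_geodesic hzm letm; have /sphereP[hq _] := hqt.
exists q => //; apply: lengthened_through (leq_trans letm lemb) hq _.
apply: contra hz => /ball_trans/(_ hzq); apply: ball_mono; lia.
Qed.

Lemma lengthened_near b l T : v \in sphere e' l x ->
  T <= b -> 2 * T + 2 <= l -> T < #|lengthened b.+1 x|.
Proof.
move=> hvl leTb leTl; apply: (@sphere_hits_card _ e' x) => t letT.
have letl : t <= l by lia.
have [q hqt _] := sphere_geodesic hvl letl; have /sphereP[hq _] := hqt.
exists q => //; apply: lengthened_through (leq_trans letT leTb) (hq) _.
have ltl : t + t.+1 < l by lia.
case/sphereP: hvl => _ /(_ _ ltl); apply: contra => hqv.
exact: ball_trans hq (ball_sym e'_sym hqv).
Qed.

Lemma lengthened_card beta : 0 < beta ->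
  (exists2 z, z \in ball e beta v & z \notin ball e' beta v) ->
  connect e' x v -> beta <= 3 * #|lengthened beta x|.
Proof.
case: beta => [//|b] _ [z hz hz'] /connect_ball[l0 /ball_sphere[l _ hvl]].
have [hz''|/ball_sphere[m lemb hzm]] := ball_remove_edge x hz.
  by rewrite hz'' in hz'.
have far := lengthened_far hz' hzm lemb.
have near T := @lengthened_near b l T hvl.
(* otherwise the path v ~> x ~> z avoiding vx keeps z in the ball *)
have hlm : b.+1 < l + m.
  rewrite ltnNge; apply: contra hz' => lelm; apply: ball_mono lelm _.
  case/sphereP: hvl => /(ball_sym e'_sym) hxv _.
  by case/sphereP: hzm => /(ball_trans hxv).
have := near b; have := near ((l - 2) %/ 2); lia.
Qed.

End Lengthened.

Lemma sum_card_disjoint_le n (N : {set 'I_n}) (D : 'I_n -> {set 'I_n}) :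
  (forall x y u, x \in N -> y \in N -> u \in D x -> u \in D y -> x = y) ->
  \sum_(x in N) #|D x| <= n.
Proof.
move=> disj; apply: (@leq_trans (\sum_(u : 'I_n) 1)).
  2: by rewrite sum1_card card_ord.
under eq_bigr => x _ do rewrite -sum1_card big_mkcond /=.
rewrite exchange_big /= leq_sum // => u _; rewrite -big_mkcondr sum1dep_card.
apply/card_le1_eqP => x y; rewrite !inE => /andP[hx hux] /andP[hy huy].
exact: disj hy hx huy hux.
Qed.

Unset Implicit Arguments.
Theorem lemma2 (R : realFieldType) (n : nat) (w : 'I_n -> R) (alpha : R)
    (beta : nat) (S : profile n) (v : 'I_n) :
  (forall u, (0 < w u)%R) -> (0 < alpha)%R ->
  (1 <= beta)%N -> (beta <= n - 1)%N -> (1 < beta)%N ->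
  star_game w alpha beta ->
  nash w alpha beta S ->
  (6 * n < beta * #|S v|)%N ->
  exists X : {set 'I_n},
    X \subset S v /\ (3 * n <= beta * #|X|)%N /\
    forall x, x \in X -> bridge (outcome S) v x.
Proof.
move=> _ alpha_gt0 beta_gt0 _ _ _ hne big_deg.
set e := outcome S; have e_sym : symmetric e := outcome_sym S.
have link x : x \in S v -> e v x := outcome_link hne.1.
pose N := [set x in S v | connect (remove_edge e v x) x v].
have inN x : x \in N -> e v x by rewrite inE => /andP[/link].
have cardN : beta * #|N| <= 3 * n.
  rewrite mulnC -sum_nat_const.
  apply: leq_trans (_ : \sum_(x in N) 3 * #|lengthened e v beta x| <= _).
    apply: leq_sum => x /[!inE] /andP[hx hc].
    have far := nash_link_lengthens alpha_gt0 hne hx.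
    exact: (lengthened_card e_sym (link x hx) beta_gt0 far hc).
  rewrite -big_distrr leq_mul2l /=; apply: sum_card_disjoint_le => x y u.
  move=> /inN hx /inN hy; exact: (lengthened_disjoint (outcome_irr S) hx hy).
exists (S v :\: N); split; first exact: subsetDl.
split.
  have NS : N \subset S v by apply/subsetP => x /[!inE] /andP[].
  have := cardsID N (S v); rewrite (setIidPr NS) => cardE.
  by rewrite -cardE mulnDr in big_deg; lia.
move=> x /setDP[hx]; rewrite inE hx /= => nc.
exact: bridge_remove_edge e_sym (link x hx) nc.
Qed.
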